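(* Let $m,d,h$ be natural numbers with $d\geqslant h\geqslant m+2$, and let $c,C$ be positive constants. Let $\Xi:\mathbb{R}^h\to\mathbb{R}^d$ be a linear map and $L:\mathbb{R}^h\to\mathbb{R}^m$ a surjective linear map, with $\Vert\Xi\Vert_\infty\leqslant C$ and $\operatorname{dist}((\Xi,L),V^*_{\mathrm{degen},2}(m,d,h))\geqslant c$. Let $K=\ker L$, choose any orthonormal basis $\{\mathbf v^{(1)},\dots,\mathbf v^{(h-m)}\}$ of $K$, and let $\Phi:\mathbb{R}^{h-m}\to K$ be $\Phi(\mathbf x)=\sum_{i=1}^{h-m}x_i\mathbf v^{(i)}$. Then $\Vert\Xi\Phi\Vert_\infty=O(C)$ and $\operatorname{dist}(\Xi\Phi,V_{\mathrm{degen}}(h-m,d))=\Omega(c)$.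
   Context: Matrices identified with linear maps; $\Vert\cdot\Vert_\infty$ max absolute entry; $\operatorname{dist}$ is $\ell^\infty$ distance on entries. $V^*_{\mathrm{degen},2}(m,d,h)$: pairs $(\Xi,L)$ with $\Xi:\mathbb{R}^h\to\mathbb{R}^d$, $L:\mathbb{R}^h\to\mathbb{R}^m$ linear, such that for some $i,j\leqslant d$ and $\lambda\in\mathbb{R}$, $\mathbf e_i^*-\lambda\mathbf e_j^*\neq0$ and $\Xi^*(\mathbf e_i^*-\lambda\mathbf e_j^* )\in L^*((\mathbb{R}^m)^* )$ ($\mathbf e_i^*$ the standard dual basis of $(\mathbb{R}^d)^*$, $\Xi^*\varphi=\varphi\circ\Xi$). $\operatorname{dist}((\Xi,L),V^*_{\mathrm{degen},2}(m,d,h))\geqslant c$ means $(\Xi+Q,L)\notin V^*_{\mathrm{degen},2}(m,d,h)$ for all linear $Q:\mathbb{R}^h\to\mathbb{R}^d$ with $\Vert Q\Vert_\infty<c$. $V_{\mathrm{degen}}(n,d)$ is the set of linear maps $\Psi=(\psi_1,\dots,\psi_d):\mathbb{R}^n\to\mathbb{R}^d$ (systems of linear forms) such that for some $i$, every partition $\mathcal P_i$ of $[d]\setminus\{i\}$ has a part $\mathcal C$ with $\psi_i\in\mathrm{span}(\psi_j:j\in\mathcal C)$; equivalently, for some $i\neq j$, $\psi_i$ is a real multiple of $\psi_j$. Implied constants depend only on $m,d,h$. *)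

(* Matrices act on column vectors: a linear map R^n -> R^k
   is a matrix 'M[R]_(k, n), applied as A *m x. *)
From HB Require Import structures.
From mathcomp Require Import all_boot all_order all_algebra.
From mathcomp Require Import reals.
Set Implicit Arguments. Unset Strict Implicit. Unset Printing Implicit Defensive.
Import Order.TTheory GRing.Theory Num.Theory.
Local Open Scope ring_scope.

Definition mx_norm_inf (R : realType) (k n : nat) (A : 'M[R]_(k, n)) : R :=
  \big[Num.max/0]_(i < k) \big[Num.max/0]_(j < n) `|A i j|.

Definition dual_e (R : realType) (d : nat) (i : 'I_d) : 'rV[R]_d :=
  \row_(k < d) (if k == i then 1 else 0).

(* (Xi, L) in V*_degen,2(m,d,h): some nonzero phi = e_i' - lambda e_j' (dual basis)
   whose pullback phi o Xi lies in the image of the dual map of L,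
   i.e. equals u o L for some functional u on R^m. *)
Definition Vstar_degen2 (R : realType) (m d h : nat)
    (Xi : 'M[R]_(d, h)) (L : 'M[R]_(m, h)) : Prop :=
  exists (i j : 'I_d) (lam : R),
    dual_e R i - lam *: dual_e R j != 0 /\
    exists u : 'rV[R]_m, (dual_e R i - lam *: dual_e R j) *m Xi = u *m L.

Definition dist_ge_Vstar_degen2 (R : realType) (m d h : nat)
    (Xi : 'M[R]_(d, h)) (L : 'M[R]_(m, h)) (c : R) : Prop :=
  forall Q : 'M[R]_(d, h), mx_norm_inf Q < c -> ~ Vstar_degen2 (Xi + Q) L.

Definition in_span_rows (R : realType) (n d : nat) (Psi : 'M[R]_(d, n))
    (i : 'I_d) (C : {set 'I_d}) : Prop :=
  exists a : 'I_d -> R, row i Psi = \sum_(j in C) a j *: row j Psi.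

Definition V_degen (R : realType) (n d : nat) (Psi : 'M[R]_(d, n)) : Prop :=
  exists i : 'I_d, forall P : {set {set 'I_d}},
    partition P [set~ i] -> exists2 C, C \in P & in_span_rows Psi i C.

Definition dist_ge_V_degen (R : realType) (n d : nat) (Psi : 'M[R]_(d, n)) (c : R)
  : Prop :=
  forall Q : 'M[R]_(d, n), mx_norm_inf Q < c -> ~ V_degen (Psi + Q).

Definition mx_surjective (R : realType) (m h : nat) (L : 'M[R]_(m, h)) : Prop :=
  forall y : 'cV[R]_m, exists x : 'cV[R]_h, L *m x = y.

(* The columns v^(1..k) of V form an orthonormal basis of ker L;
   V is then the matrix of Phi(x) = sum_i x_i v^(i). *)
Definition orthonormal_basis_ker (R : realType) (m h k : nat)
    (L : 'M[R]_(m, h)) (V : 'M[R]_(h, k)) : Prop :=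
  [/\ V^T *m V = 1%:M,
      L *m V = 0 &
      forall x : 'cV[R]_h, L *m x = 0 -> exists y : 'cV[R]_k, x = V *m y].

(** The orthonormal columns of [Phi] have entries in [[-1, 1]], which gives the
    norm bound.  For the distance bound, a perturbation [Q'] of [Xi *m Phi] lifts
    to the perturbation [Q' *m Phi^T] of [Xi], of norm at most [(h - m) * |Q'|],
    with [(Xi + Q' *m Phi^T) *m Phi = Xi *m Phi + Q'].  If the perturbed system of
    linear forms were degenerate, two of its forms would be proportional,
    [psi_i = a psi_j]; then [e_i' - a e_j'] pulled back by [Xi + Q' *m Phi^T]
    vanishes on [ker L = im Phi], hence factors through [L], which puts the lifted
    pair into [V*_degen,2]. *)
From HB Require Import structures.
From mathcomp Require Import all_boot all_order all_algebra.
From mathcomp Require Import reals.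
Import Order.TTheory GRing.Theory Num.Theory.
Local Open Scope ring_scope.

Section MxNormInf.

Context {R : realType}.

Lemma mx_norm_inf_ge0 {k n} (A : 'M[R]_(k, n)) : 0 <= mx_norm_inf A.
Proof.
rewrite /mx_norm_inf; elim/big_ind: _ => // [x y x0 _|i _]; first by rewrite le_max x0.
by elim/big_ind: _ => // x y x0 _; rewrite le_max x0.
Qed.

Lemma mx_norm_inf_entry {k n} (A : 'M[R]_(k, n)) i j : `|A i j| <= mx_norm_inf A.
Proof.
rewrite /mx_norm_inf (bigD1 i) //= le_max; apply/orP; left.
by rewrite (bigD1 j) //= le_max lexx.
Qed.

Lemma mx_norm_inf_le {k n} (A : 'M[R]_(k, n)) b :
  0 <= b -> (forall i j, `|A i j| <= b) -> mx_norm_inf A <= b.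
Proof.
move=> b0 Ab; rewrite /mx_norm_inf.
elim/big_ind: _ => // [x y xb yb|i _]; first by rewrite ge_max xb yb.
by elim/big_ind: _ => // x y xb yb; rewrite ge_max xb yb.
Qed.

Lemma mx_norm_inf_mul {k n p} (A : 'M[R]_(k, n)) (B : 'M[R]_(n, p)) :
  mx_norm_inf (A *m B) <= n%:R * mx_norm_inf A * mx_norm_inf B.
Proof.
apply: mx_norm_inf_le => [|i j]; first by rewrite !mulr_ge0 ?mx_norm_inf_ge0.
rewrite mxE; apply: le_trans (ler_norm_sum _ _ _) _.
rewrite -mulrA mulr_natl -[X in _ *+ X]card_ord -sumr_const.
apply: ler_sum => l _.
by rewrite normrM ler_pM ?mx_norm_inf_entry.
Qed.

Lemma mx_norm_inf_tr {k n} (A : 'M[R]_(k, n)) : mx_norm_inf A^T = mx_norm_inf A.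
Proof.
apply/eqP; rewrite eq_le; apply/andP; split.
  by apply: mx_norm_inf_le => [|i j]; rewrite ?mx_norm_inf_ge0 // mxE mx_norm_inf_entry.
apply: mx_norm_inf_le => [|i j]; first exact: mx_norm_inf_ge0.
by move: (mx_norm_inf_entry A^T j i); rewrite mxE.
Qed.

(* The diagonal entry [(V^T V) j j = 1] is the sum of the squares of column [j]. *)
Lemma mx_norm_inf_orthonormal {h k} (V : 'M[R]_(h, k)) :
  V^T *m V = 1%:M -> mx_norm_inf V <= 1.
Proof.
move=> VV1; apply: mx_norm_inf_le => // i j.
have : (V^T *m V) j j = 1 by rewrite VV1 mxE eqxx.
rewrite mxE (bigD1 i) //= !mxE => col_sq.
have rest_ge0 : 0 <= \sum_(l < h | l != i) V^T j l * V l j.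
  by apply: sumr_ge0 => l _; rewrite mxE -expr2 sqr_ge0.
rewrite -(@ler_pXn2r _ 2) ?nnegrE ?normr_ge0 // expr1n real_normK ?num_real //.
by rewrite expr2 -col_sq lerDl.
Qed.

End MxNormInf.

Lemma dual_eE (R : realType) d (i : 'I_d) : dual_e R i = delta_mx 0 i.
Proof. by apply/rowP => k; rewrite !mxE /=; case: (k == i). Qed.

Lemma dual_e_mul (R : realType) d n (i : 'I_d) (M : 'M[R]_(d, n)) :
  dual_e R i *m M = row i M.
Proof. by rewrite dual_eE -rowE. Qed.

Lemma dual_eB_neq0 (R : realType) d (i j : 'I_d) (a : R) :
  j != i -> dual_e R i - a *: dual_e R j != 0.
Proof.
move=> ji; apply/eqP => /rowP /(_ i).
by rewrite !mxE eqxx (eq_sym i j) (negbTE ji) mulr0 subr0 => /eqP; rewrite oner_eq0.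
Qed.

(* Take the partition of [[d] \ {i}] into singletons. *)
Lemma V_degen_proportional_rows (R : realType) n d (Psi : 'M[R]_(d, n)) :
  V_degen Psi -> exists i j (a : R), j != i /\ row i Psi = a *: row j Psi.
Proof.
case=> i degen_i.
have [C + [a span_i]] := degen_i _ (preim_partitionP id [set~ i]).
case/imsetP=> j; rewrite !inE => ji C_def; rewrite {C}C_def in span_i.
exists i, j, (a j); split=> //; rewrite span_i (big_pred1 j) // => l.
by rewrite !inE [j == l]eq_sym; case: (eqVneq l j) => [->|]; rewrite ?ji ?andbF.
Qed.

Lemma factor_through_of_ker (R : realType) m h k (L : 'M[R]_(m, h))
    (Phi : 'M[R]_(h, k)) (w : 'rV[R]_h) :
  (forall x : 'cV[R]_h, L *m x = 0 -> exists y : 'cV[R]_k, x = Phi *m y) ->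
  w *m Phi = 0 -> exists u : 'rV[R]_m, w = u *m L.
Proof.
move=> ker_sub wPhi0.
suff /submxP[u ->] : (w <= L)%MS by exists u.
rewrite submxE; apply/eqP/matrixP => r s.
(* Each column of [cokermx L] lies in [ker L], hence in the image of [Phi]. *)
have /ker_sub[y coker_s] : L *m col s (cokermx L) = 0.
  by rewrite colE mulmxA mulmx_coker mul0mx.
have -> : (w *m cokermx L) r s = (w *m col s (cokermx L)) r 0.
  by rewrite !mxE; apply: eq_bigr => l _; rewrite [in RHS]mxE.
by rewrite coker_s mulmxA wPhi0 mul0mx !mxE.
Qed.

Lemma Vstar_degen2_of_V_degen (R : realType) m d h k (Xi : 'M[R]_(d, h))
    (L : 'M[R]_(m, h)) (Phi : 'M[R]_(h, k)) :
  (forall x : 'cV[R]_h, L *m x = 0 -> exists y : 'cV[R]_k, x = Phi *m y) ->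
  V_degen (Xi *m Phi) -> Vstar_degen2 Xi L.
Proof.
move=> ker_sub /V_degen_proportional_rows[i [j [a [ji prop_ij]]]].
exists i, j, a; split; first exact: dual_eB_neq0.
apply: factor_through_of_ker ker_sub _.
by rewrite -mulmxA mulmxBl -scalemxAl !dual_e_mul prop_ij subrr.
Qed.

Theorem lemma7p2 (R : realType) (m d h : nat) :
  (m + 2 <= h)%N -> (h <= d)%N ->
  exists (A B : R), 0 < A /\ 0 < B /\
  forall (c C : R), 0 < c -> 0 < C ->
  forall (Xi : 'M[R]_(d, h)) (L : 'M[R]_(m, h)),
    mx_surjective L ->
    mx_norm_inf Xi <= C ->
    dist_ge_Vstar_degen2 Xi L c ->
    forall Phi : 'M[R]_(h, h - m),
      orthonormal_basis_ker L Phi ->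
      mx_norm_inf (Xi *m Phi) <= A * C /\
      dist_ge_V_degen (Xi *m Phi) (B * c).
Proof.
move=> hm _; have km_gt0 : (0 < h - m)%N by rewrite subn_gt0 (leq_trans _ hm) // addn2.
have kR_gt0 : 0 < (h - m)%:R :> R by rewrite ltr0n.
exists h%:R, ((h - m)%:R)^-1; split; first by rewrite ltr0n (leq_trans km_gt0) ?leq_subr.
split=> [|c C c0 C0 Xi L _ Xi_le dist_Xi Phi [PhiPhi1 _ ker_sub]]; first by rewrite invr_gt0.
have Phi_le1 := mx_norm_inf_orthonormal Phi PhiPhi1.
split.
  apply: le_trans (mx_norm_inf_mul _ _) _.
  by rewrite -[X in _ <= X]mulr1 ler_pM ?mulr_ge0 ?ler_wpM2l ?ler0n ?mx_norm_inf_ge0.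
move=> Q' Q'_lt degen; apply: (dist_Xi (Q' *m Phi^T)).
  apply: le_lt_trans (mx_norm_inf_mul _ _) _; rewrite mx_norm_inf_tr.
  apply: le_lt_trans (_ : (h - m)%:R * mx_norm_inf Q' < c).
    by rewrite -[X in _ <= X]mulr1 ler_wpM2l ?mulr_ge0 ?mx_norm_inf_ge0.
  by rewrite mulrC -ltr_pdivlMr // mulrC.
apply: Vstar_degen2_of_V_degen ker_sub _.
by rewrite mulmxDl -mulmxA PhiPhi1 mulmx1.
Qed.
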